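(* Let $t=\lceil\frac{n-\kappa}{2}\rceil$ and write $\mathrm{Small}(x)=\mathrm{Small}_t(x)$. Suppose $\mathrm{Small}(u)$ exists and $v\in\mathrm{Side}_{\mathrm{Small}(u)}(u)$. Then $\mathrm{Small}(v)$ exists, $\mathrm{Side}_{\mathrm{Small}(v)}(v)\subseteq\mathrm{Side}_{\mathrm{Small}(u)}(u)$, and either $\mathrm{Small}(v)=\mathrm{Small}(u)$ or $\mathrm{Small}(v)\subseteq\mathrm{Small}(u)\cup\mathrm{Side}_{\mathrm{Small}(u)}(u)$ (i.e. $\mathrm{Small}(v)$ is a laminar cut of $\mathrm{Small}(u)$).
   Context: $G=(V,E)$ is a finite, simple, connected, undirected, non-complete graph with $n=|V|$; $\kappa$ is its vertex connectivity, assumed $\kappa<n/4$. A cut is a set $U\subset V$ whose removal disconnects $G$; a $\kappa$-cut is a cut of size $\kappa$; a side of $U$ is a connected component of the subgraph induced on $V\setminus U$; $\mathrm{Side}_U(x)$ is the side containing $x\notin U$. For a vertex $x$ and $t\le\lceil\frac{n-\kappa}{2}\rceil$, $\mathrm{Small}_t(x)$ denotes, when it exists, the unique $\kappa$-cut $Y$ with $x\notin Y$, $|\mathrm{Side}_Y(x)|\le t$, and $\mathrm{Side}_Y(x)\subseteq\mathrm{Side}_U(x)$ for every $\kappa$-cut $U$ with $x\notin U$ and $|\mathrm{Side}_U(x)|\le t$ (it exists iff some $\kappa$-cut $U$ with $x\notin U$ has $|\mathrm{Side}_U(x)|\le t$). *)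

From mathcomp Require Import all_boot.
Set Implicit Arguments. Unset Strict Implicit. Unset Printing Implicit Defensive.

Section Graph.
Variables (T : finType) (e : rel T).

Definition simple_graph := symmetric e /\ irreflexive e.
Definition graph_connected := forall x y : T, connect e x y.
Definition non_complete := exists x y : T, (x != y) && ~~ e x y.

Definition erem (U : {set T}) : rel T :=
  [rel x y | [&& e x y, x \notin U & y \notin U]].

Definition is_cut (U : {set T}) : bool :=
  [exists x, exists y, [&& x \notin U, y \notin U & ~~ connect (erem U) x y]].

Definition vertex_connectivity (k : nat) : Prop :=
  (exists U, is_cut U /\ #|U| = k) /\ (forall U, is_cut U -> k <= #|U|).

Definition kcut (k : nat) (U : {set T}) : bool := is_cut U && (#|U| == k).

Definition Side (U : {set T}) (x : T) : {set T} :=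
  [set y | (y \notin U) && connect (erem U) x y].

Definition is_small (k t : nat) (x : T) (Y : {set T}) : bool :=
  [&& kcut k Y, x \notin Y, #|Side Y x| <= t &
   [forall U : {set T}, (kcut k U && (x \notin U) && (#|Side U x| <= t))
                          ==> (Side Y x \subset Side U x)]].

(* Small_t(x), when it exists (it is unique when it exists) *)
Definition Small (k t : nat) (x : T) : option {set T} :=
  [pick Y | is_small k t x Y].
End Graph.

From mathcomp Require Import all_boot zify.

(* The proof rests
   on three facts about minimum cuts, all obtained from the elementary
   "separation principle": if a set S containing x can only be left through
   vertices of Z, then Side_Z(x) is inside S, and Z is a cut as soon as some
   vertex lies outside both Z and S.
   1. Uncrossing: if U, W are k-cuts whose sides at v have at most t vertices,
      then the boundary of Side_U(v) n Side_W(v) is again a k-cut; this is the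
      submodular counting |X| + |X'| = |U| + |W| for the inner and outer
      separators X, X' of the two sides, with t <= (n-k+1)/2 forcing |X'| >= k.
   2. Hence a k-cut with the side of x of minimal size is Small_t(x), which
      therefore exists whenever some small k-cut avoiding x does.
   3. Laminarity: a minimum cut Y whose side at v lies in Side_U(w) is
      contained in U u Side_U(w).
   The theorem follows: Small(u) witnesses that Small(v) exists, minimality of
   Small(v) gives the inclusion of sides, and 3. gives laminarity. *)

Set Implicit Arguments.
Unset Strict Implicit.
Unset Printing Implicit Defensive.

Section Sides.
Variables (T : finType) (e : rel T).

Definition closed_off (Z S : {set T}) : Prop :=
  forall a b, a \in S -> e a b -> b \notin Z -> b \in S.

Lemma side_self (U : {set T}) x : x \notin U -> x \in Side e U x.
Proof. by move=> xU; rewrite inE xU connect0. Qed.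

Lemma side_notin (U : {set T}) x y : y \in Side e U x -> y \notin U.
Proof. by rewrite inE => /andP[]. Qed.

Lemma side_closed (U : {set T}) x : closed_off U (Side e U x).
Proof.
move=> a b; rewrite !inE => /andP[aU xa] eab bU; rewrite bU.
by apply: connect_trans xa (connect1 _); rewrite /erem /= eab aU bU.
Qed.

Lemma side_sub_closed (Z S : {set T}) x :
  x \in S -> closed_off Z S -> Side e Z x \subset S.
Proof.
move=> xS clS; apply/subsetP => y; rewrite inE => /andP[_ /connectP[p xp ->]].
elim: p x xS xp => [|z p IH] x xS //= /andP[/and3P[exz _ zZ] zp].
exact: IH (clS _ _ xS exz zZ) zp.
Qed.

Lemma cut_of_closed (Z S : {set T}) x y :
  x \in S -> x \notin Z -> closed_off Z S -> y \notin Z -> y \notin S ->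
  is_cut e Z.
Proof.
move=> xS xZ clS yZ yS; apply/existsP; exists x; apply/existsP; exists y.
rewrite xZ yZ /=; apply/negP => cxy.
have : y \in Side e Z x by rewrite inE yZ cxy.
by move/(subsetP (side_sub_closed xS clS)); rewrite (negbTE yS).
Qed.

Hypothesis sym_e : symmetric e.

Lemma erem_sym (U : {set T}) : symmetric (erem e U).
Proof. by move=> x y; rewrite /erem /= sym_e (andbC (x \notin U)). Qed.

Lemma side_eq (U : {set T}) x y : y \in Side e U x -> Side e U y = Side e U x.
Proof.
rewrite inE => /andP[_ cxy]; apply/setP => z; rewrite !inE.
case: (z \in U) => //=; apply/idP/idP; first exact: connect_trans.
by apply: connect_trans; rewrite (sym_connect_sym (erem_sym U)).
Qed.

Lemma cut_escape (U : {set T}) x :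
  is_cut e U -> exists2 y, y \notin U & y \notin Side e U x.
Proof.
move=> /existsP[a /existsP[b /and3P[aU bU nab]]].
have [aS|] := boolP (a \in Side e U x); last by exists a.
have [bS|] := boolP (b \in Side e U x); last by exists b.
move: aS bS; rewrite !inE => /andP[_ xa] /andP[_ xb].
rewrite (sym_connect_sym (erem_sym U)) in xa.
by rewrite (connect_trans xa xb) in nab.
Qed.

End Sides.

Section Uncrossing.
Variables (T : finType) (e : rel T) (A B U W : {set T}).
Hypotheses (dAU : [disjoint A & U]) (dBW : [disjoint B & W]).
Hypotheses (clA : closed_off e U A) (clB : closed_off e W B).

(* the separator of A n B, and the complementary separator of A u B *)
Definition inner_sep : {set T} := ((A :|: U) :&: (B :|: W)) :\: (A :&: B).
Definition outer_sep : {set T} := (U :\: B) :|: (W :\: A).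

Lemma card_seps : #|inner_sep| + #|outer_sep| = #|U| + #|W|.
Proof.
have nAU y : ~~ ((y \in A) && (y \in U)).
  by apply/negP => /andP[/(disjointFr dAU)->].
have nBW y : ~~ ((y \in B) && (y \in W)).
  by apply/negP => /andP[/(disjointFr dBW)->].
have sepU : inner_sep :|: outer_sep = U :|: W.
  apply/setP => y; rewrite !inE; move: (nAU y) (nBW y).
  by case: (y \in A); case: (y \in B); case: (y \in U); case: (y \in W).
have sepI : inner_sep :&: outer_sep = U :&: W.
  apply/setP => y; rewrite !inE; move: (nAU y) (nBW y).
  by case: (y \in A); case: (y \in B); case: (y \in U); case: (y \in W).
by rewrite -cardsUI sepU sepI cardsUI.
Qed.

Lemma inner_closed : closed_off e inner_sep (A :&: B).
Proof.
move=> a b; rewrite inE => /andP[aA aB] eab; apply: contraNT => nAB.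
have bAU : (b \in A) || (b \in U).
  by case bU: (b \in U); rewrite ?orbT // (clA aA eab) ?bU.
have bBW : (b \in B) || (b \in W).
  by case bW: (b \in W); rewrite ?orbT // (clB aB eab) ?bW.
by rewrite /inner_sep in_setD nAB in_setI !in_setU bAU bBW.
Qed.

Lemma outer_closed : closed_off e outer_sep (A :|: B).
Proof.
move=> a b; rewrite /outer_sep !inE negb_or !negb_and !negbK.
case/orP => [aA|aB] eab /andP[bUB bWA].
  by case bU: (b \in U); [move: bUB; rewrite bU orbF => ->; rewrite orbT | rewrite (clA aA eab) ?bU].
case bW: (b \in W); last by rewrite (clB aB eab) ?bW ?orbT.
by move: bWA; rewrite bW orbF => ->.
Qed.

End Uncrossing.

Section MinimumCuts.
Variables (T : finType) (e : rel T) (k : nat).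
Hypothesis k_min : forall Z : {set T}, is_cut e Z -> k <= #|Z|.

Lemma uncross (t : nat) (U W : {set T}) v :
  2 * t <= (#|T| - k).+1 -> t + k < #|T| ->
  kcut e k U -> kcut e k W -> v \notin U -> v \notin W ->
  #|Side e U v| <= t -> #|Side e W v| <= t ->
  exists X : {set T}, [/\ kcut e k X, v \notin X &
    Side e X v \subset Side e U v :&: Side e W v].
Proof.
move=> t2 tk /andP[_ /eqP cU] /andP[_ /eqP cW] vU vW sA sB.
set A := Side e U v; set B := Side e W v.
have {sA}sizeA : #|A| <= t := sA; have {sB}sizeB : #|B| <= t := sB.
have dAU : [disjoint A & U] by apply/pred0P => y /=; apply/andP => -[/side_notin/negbTE->].
have dBW : [disjoint B & W] by apply/pred0P => y /=; apply/andP => -[/side_notin/negbTE->].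
have clA : closed_off e U A := @side_closed _ e U v.
have clB : closed_off e W B := @side_closed _ e W v.
set X := inner_sep A B U W; set X' := outer_sep A B U W.
have vAB : v \in A :&: B by rewrite inE !side_self.
have cX : #|X| + #|X'| = 2 * k by rewrite card_seps // cU cW; lia.
have cAB : #|A :|: B| + #|A :&: B| <= 2 * t by rewrite cardsUI; lia.
have AB_pos : 0 < #|A :&: B| by apply/card_gt0P; exists v.
(* either X' is a cut, or A, B and X' cover T and |X'| >= n - |A u B| >= k *)
have outer_big : k <= #|X'|.
  have [coverT|[y yABX]] := set_0Vmem (~: (A :|: B :|: X')).
    have := cardsC (A :|: B :|: X'); rewrite coverT cards0 addn0.
    have := (leq_card_setU (A :|: B) X').1; lia.
  apply: k_min; apply: (@cut_of_closed _ _ _ (A :|: B) v y).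
  - by move: vAB; rewrite !inE => /andP[->].
  - by rewrite /X' /outer_sep !inE (negbTE vU) (negbTE vW) !andbF.
  - exact: outer_closed.
  - by move: yABX; rewrite in_setC in_setU negb_or => /andP[].
  - by move: yABX; rewrite in_setC in_setU negb_or => /andP[].
have inner_small : #|X| <= k by lia.
(* as |X| + |A n B| <= k + t < n, X separates v from some vertex *)
have [y yX yAB] : exists2 y, y \notin X & y \notin A :&: B.
  have : 0 < #|~: (X :|: A :&: B)|.
    have := cardsC (X :|: A :&: B); have := (leq_card_setU X (A :&: B)).1.
    have := subset_leq_card (subsetIl A B); lia.
  by case/card_gt0P => y; rewrite in_setC in_setU negb_or => /andP[yX yAB]; exists y.
have vX : v \notin X by rewrite /X /inner_sep in_setD vAB.
have cutX : is_cut e X.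
  by apply: (cut_of_closed vAB vX _ yX yAB); apply: inner_closed.
exists X; split => //; first by rewrite /kcut cutX eqn_leq inner_small k_min.
by apply: side_sub_closed vAB _; apply: inner_closed.
Qed.

Lemma small_min (t : nat) x (Y U : {set T}) :
  is_small e k t x Y -> kcut e k U -> x \notin U -> #|Side e U x| <= t ->
  Side e Y x \subset Side e U x.
Proof.
by case/and4P => _ _ _ /forallP/(_ U) /implyP H kU xU sU; apply: H; rewrite kU xU sU.
Qed.

(* a k-cut minimizing the side of x is Small_t(x); so Small_t(x) exists as
   soon as some k-cut avoiding x has a side of size at most t *)
Lemma small_exists (t : nat) x (Y : {set T}) :
  2 * t <= (#|T| - k).+1 -> t + k < #|T| ->
  kcut e k Y -> x \notin Y -> #|Side e Y x| <= t ->
  exists Ys : {set T}, is_small e k t x Ys.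
Proof.
move=> t2 tk kY xY sY.
pose P Z := [&& kcut e k Z, x \notin Z & #|Side e Z x| <= t].
have PY : P Y by rewrite /P kY xY sY.
case: (arg_minnP (fun Z => #|Side e Z x|) PY) => Ym /and3P[kYm xYm sYm] minYm.
exists Ym; rewrite /is_small kYm xYm sYm /=.
apply/forallP => U; apply/implyP => /andP[/andP[kU xU] sU].
have [X [kX xX sX]] := uncross t2 tk kYm kU xYm xU sYm sU.
have leX := subset_leq_card sX.
have PX : P X.
  by rewrite /P kX xX (leq_trans leX) // (leq_trans (subset_leq_card (subsetIl _ _))).
have : Side e Ym x :&: Side e U x == Side e Ym x.
  by rewrite eqEcard subsetIl (leq_trans (minYm X PX) leX).
by move/eqP/setIidPl.
Qed.

Hypothesis sym_e : symmetric e.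

Lemma min_cut_laminar (U Y : {set T}) w v :
  kcut e k Y -> v \notin Y -> Side e Y v \subset Side e U w ->
  Y \subset U :|: Side e U w.
Proof.
move=> /andP[cutY /eqP cY] vY sub.
set S := Side e Y v; set Z := Y :&: (U :|: Side e U w).
have clS : closed_off e Z S.
  move=> a b aS eab bZ; have [bY|bY] := boolP (b \in Y); last exact: side_closed aS eab bY.
  have [bU|bU] := boolP (b \in U); first by move: bZ; rewrite in_setI in_setU bY bU.
  by move: bZ; rewrite in_setI in_setU bY (negbTE bU) (side_closed (subsetP sub a aS) eab bU).
have [y yY yS] := @cut_escape _ _ sym_e Y v cutY.
have cutZ : is_cut e Z.
  apply: (cut_of_closed (side_self _ vY) _ clS _ yS); by rewrite inE ?(negbTE vY) ?(negbTE yY).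
have : Z == Y by rewrite eqEcard subsetIl cY k_min.
by move/eqP <-; rewrite subsetIr.
Qed.

End MinimumCuts.

Lemma Small_is_small (T : finType) (e : rel T) k t x (Y : {set T}) :
  Small e k t x = Some Y -> is_small e k t x Y.
Proof. by rewrite /Small; case: pickP => // Z HZ [<-]. Qed.

Lemma Small_defined (T : finType) (e : rel T) k t x (Y : {set T}) :
  is_small e k t x Y -> exists Ys, Small e k t x = Some Ys.
Proof. by rewrite /Small; case: pickP => [Z _ | /(_ Y)->] //; exists Z. Qed.

Theorem lemma6 (T : finType) (e : rel T) (k : nat) (u v : T) (Yu : {set T}) :
  simple_graph e -> graph_connected e -> non_complete e ->
  vertex_connectivity e k -> 4 * k < #|T| ->
  let t := (#|T| - k).+1 %/ 2 in
  Small e k t u = Some Yu ->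
  v \in Side e Yu u ->
  exists Yv : {set T},
    [/\ Small e k t v = Some Yv,
        Side e Yv v \subset Side e Yu u &
        Yv = Yu \/ Yv \subset Yu :|: Side e Yu u].
Proof.
move=> [sym_e _] _ [x0 [y0 /andP[x0y0 _]]] [_ k_min] nk t /Small_is_small smallYu vSu.
have t2 : 2 * t <= (#|T| - k).+1 by rewrite mulnC leq_divM.
(* a non-complete graph has two vertices, which with 4k < n gives t + k < n *)
have n2 : 1 < #|T| by have := cards2 x0 y0; rewrite x0y0 => <-; apply: max_card.
have tk : t + k < #|T| by lia.
have /and4P[kYu _ sYu _] := smallYu.
have vYu : v \notin Yu := side_notin vSu.
have eS : Side e Yu v = Side e Yu u := side_eq sym_e vSu.
have sYu_v : #|Side e Yu v| <= t by rewrite eS.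
have [Ys smallYs] := small_exists k_min t2 tk kYu vYu sYu_v.
have [Yv SmallYv] := Small_defined smallYs.
have smallYv := Small_is_small SmallYv.
have sub : Side e Yv v \subset Side e Yu u.
  by rewrite -eS (small_min smallYv kYu vYu) ?eS.
exists Yv; split => //; right.
by apply: (min_cut_laminar k_min sym_e _ _ sub); case/and4P: smallYv.
Qed.
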